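(* The function $f:(0,\infty)\to\mathbb{R}$, $f(z)=\frac{W(z)}{1+W(z)}$ (which equals $1-T_0(-z)$ where $T_0(z)=1/(1-T(z))$ and $T(z)=\sum_{n\ge1}n^{n-1}z^n/n!$, for small $z$), is a Bernstein function.
   Context: $W$ is the principal branch of Lambert's W function: the solution of $W(z)e^{W(z)}=z$ that is real and positive for $z>0$, with $W(z)=\sum_{n\ge1}(-n)^{n-1}z^n/n!$ near $0$. A $C^\infty$ function $g:(0,\infty)\to\mathbb{R}$ is completely monotonic if $(-1)^ng^{(n)}(z)\ge0$ for all $z>0$ and $n\ge0$; $f$ is a Bernstein function if $f$ is $C^\infty$, $f(z)>0$ for all $z>0$, and $f'$ is completely monotonic. *)

From Stdlib Require Import Reals ClassicalEpsilon.
From Coquelicot Require Import Coquelicot.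
Open Scope R_scope.

(* Principal branch of Lambert W on (0,oo): the unique real w > 0 with
   w * exp w = z (for z > 0).  Values for z <= 0 are irrelevant (unspecified). *)
Definition LambertW (z : R) : R :=
  epsilon (inhabits 0) (fun w => 0 < w /\ w * exp w = z).

Definition smooth_pos (g : R -> R) : Prop :=
  forall (n : nat) (z : R), 0 < z -> ex_derive_n g n z.

Definition completely_monotonic (g : R -> R) : Prop :=
  smooth_pos g /\
  forall (n : nat) (z : R), 0 < z -> 0 <= (-1) ^ n * Derive_n g n z.

Definition bernstein (f : R -> R) : Prop :=
  smooth_pos f /\ (forall z, 0 < z -> 0 < f z) /\ completely_monotonic (Derive f).

(* W is the inverse of w |-> w e^w, so W' = e^(-W) / (1 + W); and
   f = W/(1 + W) = 1 - 1/(1 + W) gives f' = W' / (1 + W)^2.  Both x |-> e^(-x) and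
   x |-> 1/(1+x) are completely monotonic, and composing a completely
   monotonic function with a positive function whose derivative is
   completely monotonic of order n yields one of order n + 1.  Since W' is
   the product of two such compositions with W, induction on n shows that W'
   is completely monotonic of every order, hence so is f'. *)
From Stdlib Require Import Reals Lra Psatz ClassicalEpsilon Ranalysis5 Factorial.
From Coquelicot Require Import Coquelicot.
Open Scope R_scope.

Definition xexp (w : R) : R := w * exp w.

Lemma xexp_lt x y : 0 <= x -> x < y -> xexp x < xexp y.
Proof.
  intros Hx Hxy; unfold xexp.
  assert (exp x < exp y) by (apply exp_increasing; lra).
  assert (0 < exp x) by apply exp_pos.
  nra.
Qed.

Lemma xexp_pos w : 0 < w -> 0 < xexp w.
Proof. intros Hw; unfold xexp; apply Rmult_lt_0_compat; [lra | apply exp_pos]. Qed.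

Lemma LambertW_spec z : 0 < z -> 0 < LambertW z /\ xexp (LambertW z) = z.
Proof.
  intros Hz; unfold LambertW; apply epsilon_spec.
  assert (Hc : continuity (fun w => xexp w - z)) by (unfold xexp; intros x; reg).
  assert (H0 : xexp 0 - z < 0) by (unfold xexp; lra).
  assert (H1 : 0 < xexp z - z).
  { unfold xexp. assert (1 + z < exp z) by (apply exp_ineq1; lra). nra. }
  destruct (IVT (fun w => xexp w - z) 0 z Hc Hz H0 H1) as [w [[[Hw | <-] _] Hwz]].
  - exists w; split; [exact Hw | unfold xexp in Hwz; lra].
  - unfold xexp in Hwz; lra.
Qed.

Lemma LambertW_pos z : 0 < z -> 0 < LambertW z.
Proof. intros Hz; apply LambertW_spec, Hz. Qed.

Lemma xexp_LambertW z : 0 < z -> xexp (LambertW z) = z.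
Proof. intros Hz; apply LambertW_spec, Hz. Qed.

Lemma LambertW_xexp w : 0 < w -> LambertW (xexp w) = w.
Proof.
  intros Hw.
  destruct (LambertW_spec _ (xexp_pos w Hw)) as [Hpos Heq].
  destruct (Rtotal_order (LambertW (xexp w)) w) as [H | [H | H]]; auto;
    apply xexp_lt in H; lra.
Qed.

Lemma LambertW_le x y : 0 < x -> x <= y -> LambertW x <= LambertW y.
Proof.
  intros Hx Hxy.
  destruct (Rle_lt_dec (LambertW x) (LambertW y)) as [H | H]; auto.
  apply xexp_lt in H; [| left; apply LambertW_pos; lra].
  rewrite !xexp_LambertW in H; lra.
Qed.

Lemma continuity_pt_LambertW z : 0 < z -> continuity_pt LambertW z.
Proof.
  intros Hz; pose proof (LambertW_pos z Hz) as Hw.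
  assert (Hlo : 0 < xexp (LambertW z / 2)) by (apply xexp_pos; lra).
  apply (continuity_pt_recip_interv xexp LambertW (LambertW z / 2) (LambertW z + 1)).
  - lra.
  - intros x y Hx Hxy _; apply xexp_lt; lra.
  - intros x Hx _; unfold comp, id; apply xexp_LambertW; lra.
  - intros x Hx1 Hx2; split.
    + rewrite <- (LambertW_xexp (LambertW z / 2)) by lra; apply LambertW_le; lra.
    + rewrite <- (LambertW_xexp (LambertW z + 1)) by lra; apply LambertW_le; lra.
  - intros a _; unfold xexp; reg.
  - rewrite <- (xexp_LambertW z) at 2 3 by exact Hz; split; apply xexp_lt; lra.
Qed.

(* Inverse function theorem, with xexp' w = e^w (1 + w). *)
Lemma is_derive_LambertW z : 0 < z ->
  is_derive LambertW z (exp (- LambertW z) / (1 + LambertW z)).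
Proof.
  intros Hz; apply is_derive_Reals; pose proof (LambertW_pos z Hz) as Hw.
  assert (Hd : forall a, derivable_pt xexp a) by (intros a; unfold xexp; reg).
  assert (Hxexp' : derive_pt xexp (LambertW z) (Hd (LambertW z))
                   = exp (LambertW z) * (1 + LambertW z)).
  { apply derive_pt_eq_0; unfold xexp.
    replace (exp (LambertW z) * (1 + LambertW z))
      with (1 * exp (LambertW z) + LambertW z * exp (LambertW z)) by ring.
    apply (derivable_pt_lim_mult id exp);
      [apply derivable_pt_lim_id | apply derivable_pt_lim_exp]. }
  assert (Hbetween : LambertW (z / 2) <= LambertW z <= LambertW (2 * z))
    by (split; apply LambertW_le; lra).
  pose proof (derivable_pt_lim_recip_interv xexp LambertW (z / 2) (2 * z) z
    (fun a _ => Hd a) (continuity_pt_LambertW z Hz) ltac:(lra) ltac:(lra) Hbetween) as H.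
  cbv beta in H; rewrite Hxexp' in H.
  replace (exp (- LambertW z) / (1 + LambertW z))
    with (1 / (exp (LambertW z) * (1 + LambertW z))).
  - apply H.
    + intros x Hx; unfold comp, id; apply xexp_LambertW; lra.
    + apply Rgt_not_eq, Rmult_lt_0_compat; [apply exp_pos | lra].
  - rewrite exp_Ropp; field; split; [apply Rgt_not_eq, exp_pos | lra].
Qed.

(* Complete monotonicity of order n on (0,oo), with each derivative carried as
   an explicit witness rather than through [Derive]. *)
Fixpoint cm_upto (n : nat) (F : R -> R) : Prop :=
  (forall z, 0 < z -> 0 <= F z) /\
  match n with
  | O => True
  | S m => exists G, (forall z, 0 < z -> is_derive F z (- G z)) /\ cm_upto m G
  end.

Lemma cm_upto_nonneg n F : cm_upto n F -> forall z, 0 < z -> 0 <= F z.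
Proof. destruct n; intros [HF _]; exact HF. Qed.

Lemma cm_upto_pred n : forall F, cm_upto (S n) F -> cm_upto n F.
Proof.
  induction n as [| n IH]; intros F [HF [G [HG HGcm]]]; split; auto.
  exists G; split; auto.
Qed.

Lemma cm_upto_plus n : forall F G, cm_upto n F -> cm_upto n G ->
  cm_upto n (fun z => F z + G z).
Proof.
  induction n as [| n IH]; intros F G HFcm HGcm.
  all: split; [intros z Hz; apply Rplus_le_le_0_compat; eapply cm_upto_nonneg; eauto |].
  - exact I.
  - destruct HFcm as [_ [F1 [HF1 HF1cm]]], HGcm as [_ [G1 [HG1 HG1cm]]].
    exists (fun z => F1 z + G1 z); split; auto.
    intros z Hz.
    replace (- (F1 z + G1 z)) with (plus (- F1 z) (- G1 z)) by (cbn; ring).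
    exact (is_derive_plus F G z _ _ (HF1 z Hz) (HG1 z Hz)).
Qed.

Lemma cm_upto_mult n : forall F G, cm_upto n F -> cm_upto n G ->
  cm_upto n (fun z => F z * G z).
Proof.
  induction n as [| n IH]; intros F G HFcm HGcm.
  all: split; [intros z Hz; apply Rmult_le_pos; eapply cm_upto_nonneg; eauto |].
  - exact I.
  - pose proof (cm_upto_pred _ _ HFcm) as HFn; pose proof (cm_upto_pred _ _ HGcm) as HGn.
    destruct HFcm as [_ [F1 [HF1 HF1cm]]], HGcm as [_ [G1 [HG1 HG1cm]]].
    exists (fun z => F1 z * G z + F z * G1 z); split.
    + intros z Hz.
      replace (- (F1 z * G z + F z * G1 z))
        with (plus (mult (- F1 z) (G z)) (mult (F z) (- G1 z))) by (cbn; ring).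
      exact (is_derive_mult F G z _ _ (HF1 z Hz) (HG1 z Hz) Rmult_comm).
    + apply cm_upto_plus; apply IH; auto.
Qed.

(* [gs k] plays the role of (-1)^k g^(k) for a completely monotonic g. *)
Definition cm_chain (gs : nat -> R -> R) : Prop :=
  forall k z, 0 < z -> 0 <= gs k z /\ is_derive (gs k) z (- gs (S k) z).

Section Composition.

Variables h h' : R -> R.
Hypothesis h_pos : forall z, 0 < z -> 0 < h z.
Hypothesis h_deriv : forall z, 0 < z -> is_derive h z (h' z).

Lemma is_derive_cm_chain_comp gs k : cm_chain gs -> forall z, 0 < z ->
  is_derive (fun u => gs k (h u)) z (- (gs (S k) (h z) * h' z)).
Proof.
  intros Hgs z Hz.
  replace (- (gs (S k) (h z) * h' z)) with (scal (h' z) (- gs (S k) (h z)))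
    by (cbn; unfold mult; cbn; ring).
  apply (is_derive_comp (gs k) h); [apply Hgs, h_pos | apply h_deriv]; exact Hz.
Qed.

Lemma cm_upto_comp n : forall gs, cm_chain gs -> cm_upto n h' ->
  cm_upto (S n) (fun z => gs O (h z)).
Proof.
  induction n as [| n IH]; intros gs Hgs Hh'.
  all: split; [intros z Hz; apply (Hgs O _ (h_pos z Hz)) |].
  all: exists (fun z => gs 1%nat (h z) * h' z);
    split; [apply is_derive_cm_chain_comp, Hgs | apply cm_upto_mult; [| exact Hh']].
  - split; [intros z Hz; apply (Hgs 1%nat _ (h_pos z Hz)) | exact I].
  - apply (IH (fun k => gs (S k))); [intros k; apply Hgs | apply cm_upto_pred, Hh'].
Qed.

End Composition.

Lemma locally_pos z : 0 < z -> locally z (fun u => 0 < u).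
Proof. intros Hz; apply (locally_open (fun u => 0 < u)); [apply open_gt | | ]; auto. Qed.

Lemma Derive_eq_locally F G (HF : forall z, 0 < z -> is_derive F z (G z)) z :
  0 < z -> locally z (fun u => Derive F u = G u).
Proof.
  intros Hz; apply (filter_imp (fun u => 0 < u)); [| apply locally_pos, Hz].
  intros u Hu; apply is_derive_unique, HF, Hu.
Qed.

Lemma Derive_n_S_of_is_derive F G (HF : forall z, 0 < z -> is_derive F z (G z)) k z :
  0 < z -> Derive_n F (S k) z = Derive_n G k z.
Proof.
  intros Hz; replace (S k) with (k + 1)%nat by lia.
  rewrite <- (Derive_n_comp F k 1).
  apply Derive_n_ext_loc, (Derive_eq_locally F G HF z Hz).
Qed.

Lemma ex_derive_n_S_of_is_derive F G (HF : forall z, 0 < z -> is_derive F z (G z)) k z :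
  0 < z -> ex_derive_n G k z -> ex_derive_n F (S k) z.
Proof.
  intros Hz HG; destruct k as [| k]; cbn.
  - exists (G z); apply HF, Hz.
  - apply (ex_derive_ext_loc (Derive_n G k)); [| exact HG].
    apply (filter_imp (fun u => 0 < u)); [| apply locally_pos, Hz].
    intros u Hu; symmetry; apply (Derive_n_S_of_is_derive F G HF k u Hu).
Qed.

Lemma cm_upto_Derive_n n : forall F, cm_upto n F -> forall k z, (k <= n)%nat -> 0 < z ->
  ex_derive_n F k z /\ 0 <= (-1) ^ k * Derive_n F k z.
Proof.
  induction n as [| n IH]; intros F HF [| k] z Hk Hz;
    try (cbn; rewrite Rmult_1_l; split; [exact I | apply (cm_upto_nonneg _ _ HF z Hz)]).
  - lia.
  - destruct HF as [_ [G [HG HGcm]]].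
    destruct (IH G HGcm k z ltac:(lia) Hz) as [Hex Hsign]; split.
    + apply (ex_derive_n_S_of_is_derive F (fun u => - G u) HG k z Hz).
      apply ex_derive_n_opp, Hex.
    + rewrite (Derive_n_S_of_is_derive F (fun u => - G u) HG k z Hz), Derive_n_opp.
      cbn; lra.
Qed.

Lemma bernstein_of_derive F G :
  (forall z, 0 < z -> is_derive F z (G z)) ->
  (forall n, cm_upto n G) ->
  (forall z, 0 < z -> 0 < F z) ->
  bernstein F.
Proof.
  intros HF HG Fpos.
  assert (HGn : forall n z, 0 < z -> ex_derive_n G n z /\ 0 <= (-1) ^ n * Derive_n G n z)
    by (intros n z Hz; apply (cm_upto_Derive_n n G (HG n) n z (le_n n) Hz)).
  split; [| split; [exact Fpos | split]].
  - intros [| n] z Hz; [exact I |].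
    apply (ex_derive_n_S_of_is_derive F G HF n z Hz), HGn, Hz.
  - intros n z Hz; apply (ex_derive_n_ext_loc G).
    + apply (filter_imp (fun u => Derive F u = G u)); [| apply (Derive_eq_locally F G HF z Hz)].
      intros u Hu; symmetry; exact Hu.
    + apply HGn, Hz.
  - intros n z Hz; rewrite (Derive_n_ext_loc (Derive F) G); [apply HGn, Hz |].
    apply (Derive_eq_locally F G HF z Hz).
Qed.

Definition inv_pow_chain (k : nat) (x : R) : R := INR (fact k) / (1 + x) ^ (S k).

Lemma cm_chain_inv_pow : cm_chain inv_pow_chain.
Proof.
  intros k z Hz; unfold inv_pow_chain; split.
  - apply Rdiv_le_0_compat; [apply pos_INR | apply pow_lt; lra].
  - assert ((1 + z) ^ k <> 0) by (apply pow_nonzero; lra).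
    auto_derive.
    + apply Rmult_integral_contrapositive; split; lra.
    + change (match k with O => 1 | S _ => INR k + 1 end) with (INR (S k)).
      rewrite fact_simpl, mult_INR; cbn [pow]; field; lra.
Qed.

Lemma cm_chain_exp_opp : cm_chain (fun _ x => exp (- x)).
Proof.
  intros k z Hz; split; [left; apply exp_pos |].
  auto_derive; [exact I | ring].
Qed.

Definition LambertW' (z : R) : R := inv_pow_chain O (LambertW z) * exp (- LambertW z).

Lemma is_derive_LambertW' z : 0 < z -> is_derive LambertW z (LambertW' z).
Proof.
  intros Hz; pose proof (LambertW_pos z Hz).
  replace (LambertW' z) with (exp (- LambertW z) / (1 + LambertW z)).
  - apply is_derive_LambertW, Hz.
  - unfold LambertW', inv_pow_chain; cbn; field; lra.
Qed.

Lemma cm_upto_LambertW' n : cm_upto n LambertW'.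
Proof.
  induction n as [| n IH].
  - split; [| exact I]; intros z Hz.
    apply Rmult_le_pos; [apply (cm_chain_inv_pow O) | left; apply exp_pos].
    apply LambertW_pos, Hz.
  - apply cm_upto_mult.
    + exact (cm_upto_comp _ _ LambertW_pos is_derive_LambertW' n _ cm_chain_inv_pow IH).
    + exact (cm_upto_comp _ _ LambertW_pos is_derive_LambertW' n _ cm_chain_exp_opp IH).
Qed.

Lemma is_derive_LambertW_ratio z : 0 < z ->
  is_derive (fun u => LambertW u / (1 + LambertW u)) z
            (inv_pow_chain 1 (LambertW z) * LambertW' z).
Proof.
  intros Hz.
  apply (is_derive_ext_loc (fun u => 1 - inv_pow_chain O (LambertW u))).
  - apply (filter_imp (fun u => 0 < u)); [| apply locally_pos, Hz].
    intros u Hu; pose proof (LambertW_pos u Hu); unfold inv_pow_chain; cbn; field; lra.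
  - pose proof (is_derive_cm_chain_comp _ _ LambertW_pos is_derive_LambertW'
                  inv_pow_chain O cm_chain_inv_pow z Hz) as Hcomp.
    replace (inv_pow_chain 1 (LambertW z) * LambertW' z)
      with (minus 0 (- (inv_pow_chain 1 (LambertW z) * LambertW' z))) by (cbn; ring).
    exact (is_derive_minus (fun _ : R => 1) _ z _ _
             (is_derive_const (K := R_AbsRing) (V := R_NormedModule) 1 z) Hcomp).
Qed.

Lemma cm_upto_LambertW_ratio' n :
  cm_upto n (fun z => inv_pow_chain 1 (LambertW z) * LambertW' z).
Proof.
  apply cm_upto_mult; [apply cm_upto_pred | apply cm_upto_LambertW'].
  exact (cm_upto_comp _ _ LambertW_pos is_derive_LambertW' n
           (fun k => inv_pow_chain (S k)) (fun k => cm_chain_inv_pow (S k))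
           (cm_upto_LambertW' n)).
Qed.

Theorem mainTheorem10 :
  bernstein (fun z => LambertW z / (1 + LambertW z)).
Proof.
  apply (bernstein_of_derive _ _ is_derive_LambertW_ratio cm_upto_LambertW_ratio').
  intros z Hz; pose proof (LambertW_pos z Hz); apply Rdiv_lt_0_compat; lra.
Qed.
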